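(* Let $A=(A,\wedge,\vee,\cdot,\to,1)$ be a $\mathsf{DLCMI}$ and $f:A\to A$ a function. The following are equivalent: 1. $f$ is compatible. 2. There exists a function $g:A\times A\to A$ satisfying condition (M), compatible in the first variable, and such that for every $a\in A$, $f(a)=\min\{b\in A: g(a,b)\le b\}$. 3. There exists a function $\hat g:A\times A\to A$ satisfying condition (M), compatible in the first variable, and such that for all $a,b\in A$: (i) $\hat g(a,f(a))\le f(a)$ and (ii) $f(a)\le \hat g(a,b)\vee b$.
   Context: An algebra $(A,\wedge,\vee,\cdot,\to,1)$ of type $(2,2,2,2,0)$ is a $\mathsf{DLCMI}$ if for all $a,b,c\in A$: (1) $(A,\wedge,\vee)$ is a distributive lattice; (2) $1$ is its largest element; (3) $(A,\cdot,1)$ is a commutative monoid; (4) $(a\to b)\wedge(a\to c)=a\to(b\wedge c)$; (5) $(a\to c)\wedge(b\to c)=(a\vee b)\to c$; (6) $a\to a=1$; (7) $(a\vee b)\cdot c=(a\cdot c)\vee(b\cdot c)$; (8) $(a\to b)\cdot(b\to c)\le a\to c$; (9) $a\to b\le (a\cdot c)\to(b\cdot c)$. A unary function $h:A\to A$ is compatible if for every congruence $\theta$ of $A$, $(a,b)\in\theta$ implies $(h(a),h(b))\in\theta$. A function $g:A\times A\to A$ satisfies condition (M) if for all $a,b,c\in A$, $c\ge b$ implies $g(a,c)\le g(a,b)$. $g$ is compatible in the first variable if for every $c\in A$ the unary function $x\mapsto g(x,c)$ is compatible. *)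

Section DLCMI.
Variable A : Type.
Variables (meet join mul imp : A -> A -> A) (one : A).

Definition lle (a b : A) : Prop := meet a b = a.

Record is_DLCMI : Prop := {
  meet_assoc : forall a b c, meet a (meet b c) = meet (meet a b) c;
  join_assoc : forall a b c, join a (join b c) = join (join a b) c;
  meet_comm : forall a b, meet a b = meet b a;
  join_comm : forall a b, join a b = join b a;
  meet_absorb : forall a b, meet a (join a b) = a;
  join_absorb : forall a b, join a (meet a b) = a;
  meet_join_distr : forall a b c, meet a (join b c) = join (meet a b) (meet a c);
  one_top : forall a, lle a one;
  mul_assoc : forall a b c, mul a (mul b c) = mul (mul a b) c;
  mul_comm : forall a b, mul a b = mul b a;
  mul_one : forall a, mul a one = a;
  ax4 : forall a b c, meet (imp a b) (imp a c) = imp a (meet b c);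
  ax5 : forall a b c, meet (imp a c) (imp b c) = imp (join a b) c;
  ax6 : forall a, imp a a = one;
  ax7 : forall a b c, mul (join a b) c = join (mul a c) (mul b c);
  ax8 : forall a b c, lle (mul (imp a b) (imp b c)) (imp a c);
  ax9 : forall a b c, lle (imp a b) (imp (mul a c) (mul b c))
}.

Record is_congruence (theta : A -> A -> Prop) : Prop := {
  cong_refl : forall a, theta a a;
  cong_sym : forall a b, theta a b -> theta b a;
  cong_trans : forall a b c, theta a b -> theta b c -> theta a c;
  cong_meet : forall a b c d, theta a b -> theta c d -> theta (meet a c) (meet b d);
  cong_join : forall a b c d, theta a b -> theta c d -> theta (join a c) (join b d);
  cong_mul : forall a b c d, theta a b -> theta c d -> theta (mul a c) (mul b d);
  cong_imp : forall a b c d, theta a b -> theta c d -> theta (imp a c) (imp b d)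
}.

Definition compatible (h : A -> A) : Prop :=
  forall theta, is_congruence theta -> forall a b, theta a b -> theta (h a) (h b).

Definition condM (g : A -> A -> A) : Prop :=
  forall a b c, lle b c -> lle (g a c) (g a b).

Definition compatible_first (g : A -> A -> A) : Prop :=
  forall c, compatible (fun x => g x c).

Definition is_min (P : A -> Prop) (x : A) : Prop :=
  P x /\ forall y, P y -> lle x y.

End DLCMI.
Arguments lle {A}.
Arguments is_DLCMI {A}.
Arguments is_congruence {A}.
Arguments compatible {A}.
Arguments condM {A}.
Arguments compatible_first {A}.
Arguments is_min {A}.

(* Write ∧, ∨ for meet and join.  If g a (f a) ≤ f a and f a ≤ g a b ∨ b for
   all a, b, and θ is a congruence with a θ b, then by compatibility of g in
   its first variable
     f a = f a ∧ (g a (f b) ∨ f b)  θ  f a ∧ (g b (f b) ∨ f b) = f a ∧ f b,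
   and symmetrically f b θ f b ∧ f a, so f a θ f b; only the lattice reduct is
   used.  A least solution of g a b ≤ b satisfies both inequalities by (M), and
   a compatible f is its own witness g a _ := f a. *)

From Stdlib Require Import Setoid.

Set Implicit Arguments.
Record is_lattice (A : Type) (meet join : A -> A -> A) : Prop := {
  lat_meet_assoc : forall a b c, meet a (meet b c) = meet (meet a b) c;
  lat_join_assoc : forall a b c, join a (join b c) = join (join a b) c;
  lat_meet_comm : forall a b, meet a b = meet b a;
  lat_join_comm : forall a b, join a b = join b a;
  lat_meet_absorb : forall a b, meet a (join a b) = a;
  lat_join_absorb : forall a b, join a (meet a b) = a
}.
Unset Implicit Arguments.

Section Lattice.
Context {A : Type} {meet join : A -> A -> A}.
Hypothesis HL : is_lattice meet join.

Lemma meet_idem a : meet a a = a.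
Proof.
  rewrite <- (lat_join_absorb HL a a) at 2.
  apply (lat_meet_absorb HL).
Qed.

Lemma lle_refl a : lle meet a a.
Proof. apply meet_idem. Qed.

Lemma lle_trans a b c : lle meet a b -> lle meet b c -> lle meet a c.
Proof.
  unfold lle; intros Hab Hbc.
  rewrite <- Hab, <- (lat_meet_assoc HL), Hbc; reflexivity.
Qed.

Lemma lle_joinl a b : lle meet a (join a b).
Proof. apply (lat_meet_absorb HL). Qed.

Lemma lle_joinr a b : lle meet b (join a b).
Proof. rewrite (lat_join_comm HL); apply lle_joinl. Qed.

Lemma lle_join_idl {a b : A} : lle meet a b -> join a b = b.
Proof.
  unfold lle; intros Hab.
  rewrite (lat_meet_comm HL) in Hab.
  rewrite (lat_join_comm HL), <- Hab; apply (lat_join_absorb HL).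
Qed.

End Lattice.

Lemma DLCMI_lattice {A : Type} {meet join mul imp : A -> A -> A} {one : A} :
  is_DLCMI meet join mul imp one -> is_lattice meet join.
Proof. intros HA; destruct HA; constructor; assumption. Qed.

Arguments cong_refl {A meet join mul imp theta}.
Arguments cong_sym {A meet join mul imp theta}.
Arguments cong_trans {A meet join mul imp theta}.
Arguments cong_meet {A meet join mul imp theta}.
Arguments cong_join {A meet join mul imp theta}.

Section Compatibility.
Context {A : Type} {meet join mul imp : A -> A -> A}.
Hypothesis HL : is_lattice meet join.

Lemma min_solution_bounds {g : A -> A -> A} {a x : A} :
  condM meet g -> is_min meet (fun b => lle meet (g a b) b) x ->
  lle meet (g a x) x /\ forall b, lle meet x (join (g a b) b).
Proof.
  intros HM [Hx Hmin]; split; [exact Hx |].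
  intros b; apply Hmin.
  apply (lle_trans HL) with (g a b).
  - apply HM, (lle_joinr HL).
  - apply (lle_joinl HL).
Qed.

Section Bounds.
Context {f : A -> A} {g : A -> A -> A}.
Hypothesis Hg : compatible_first meet join mul imp g.
Hypothesis Hfix : forall a, lle meet (g a (f a)) (f a).
Hypothesis Hbound : forall a b, lle meet (f a) (join (g a b) b).

Lemma cong_image_meet {theta : A -> A -> Prop}
  (Hth : is_congruence meet join mul imp theta) {a b : A} :
  theta a b -> theta (f a) (meet (f a) (f b)).
Proof.
  intros Hab.
  assert (Hjoin : theta (join (g a (f b)) (f b)) (f b)).
  { rewrite <- (lle_join_idl HL (Hfix b)) at 3.
    apply (cong_join Hth).
    - exact (Hg (f b) theta Hth a b Hab).
    - apply (cong_refl Hth). }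
  pose proof (Hbound a (f b)) as Hfa; unfold lle in Hfa.
  rewrite <- Hfa at 1.
  apply (cong_meet Hth); [apply (cong_refl Hth) | exact Hjoin].
Qed.

Lemma compatible_of_bounds : compatible meet join mul imp f.
Proof.
  intros theta Hth a b Hab.
  apply (cong_trans Hth) with (meet (f a) (f b)).
  - exact (cong_image_meet Hth Hab).
  - rewrite (lat_meet_comm HL).
    apply (cong_sym Hth), (cong_image_meet Hth).
    exact (cong_sym Hth _ _ Hab).
Qed.

End Bounds.
End Compatibility.

Theorem proposition4p8 (A : Type) (meet join mul imp : A -> A -> A) (one : A)
  (HA : is_DLCMI meet join mul imp one) (f : A -> A) :
  (compatible meet join mul imp f <->
   exists g : A -> A -> A,
     condM meet g /\ compatible_first meet join mul imp g /\
     forall a, is_min meet (fun b => lle meet (g a b) b) (f a)) /\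
  (compatible meet join mul imp f <->
   exists gh : A -> A -> A,
     condM meet gh /\ compatible_first meet join mul imp gh /\
     forall a b, lle meet (gh a (f a)) (f a) /\ lle meet (f a) (join (gh a b) b)).
Proof.
  pose proof (DLCMI_lattice HA) as HL.
  assert (Hconst : condM meet (fun a (_ : A) => f a)).
  { intros a b c _; apply (lle_refl HL). }
  split; split.
  - intros Hf; exists (fun a _ => f a).
    split; [exact Hconst | split; [intros c; exact Hf |]].
    intros a; split; [apply (lle_refl HL) | trivial].
  - intros [g [HM [Hg Hmin]]].
    apply (compatible_of_bounds HL Hg); intros a.
    + exact (proj1 (min_solution_bounds HL HM (Hmin a))).
    + exact (proj2 (min_solution_bounds HL HM (Hmin a))).
  - intros Hf; exists (fun a _ => f a).
    split; [exact Hconst | split; [intros c; exact Hf |]].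
    intros a b; split; [apply (lle_refl HL) | apply (lle_joinl HL)].
  - intros [gh [_ [Hg Hbounds]]].
    apply (compatible_of_bounds HL Hg); intros a.
    + exact (proj1 (Hbounds a a)).
    + intros b; exact (proj2 (Hbounds a b)).
Qed.
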